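(* Let $n\ge1$ and let $f$ be an automorphism of the additive group $\mathbb{Z}^n$. Then the set of lengths of the cycles of $f$ is finite.
   Context: For a bijection $f$ of a set, a cycle is a finite sequence $a_1,\dots,a_m$ of distinct elements with $f(a_j)=a_{j+1}$ for $j<m$ and $f(a_m)=a_1$; its length is $m$. *)

From HB Require Import structures.
From mathcomp Require Import all_boot all_order all_algebra.
From mathcomp Require Import boolp classical_sets cardinality.
Set Implicit Arguments. Unset Strict Implicit. Unset Printing Implicit Defensive.
Import GRing.Theory.

(* A cycle of f : T -> T is a nonempty finite sequence [:: a_1; ...; a_m] of
   pairwise distinct elements with f a_j = a_{j+1} (j < m) and f a_m = a_1.
   [fcycle f s] is exactly the latter condition (path (frel f) a_1 (rcons ... a_1)). *)
Definition is_cycle (T : eqType) (f : T -> T) (s : seq T) : bool :=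
  [&& (0 < size s)%N, uniq s & fcycle f s].

Definition cycle_lengths (T : eqType) (f : T -> T) : set nat :=
  [set m | exists s : seq T, is_cycle f s /\ size s = m].

From HB Require Import structures.
From mathcomp Require Import all_boot all_order all_algebra.
From mathcomp Require Import boolp classical_sets cardinality.
Set Implicit Arguments. Unset Strict Implicit. Unset Printing Implicit Defensive.
Import GRing.Theory.
Local Open Scope ring_scope.

(* An additive endomorphism f of Z^n is given by a rational matrix B. The
   spaces of vectors fixed by B^(j!) increase with j, so by dimension they
   stabilise at some j0; every vector fixed by a positive power B^d then lies in
   the fixed space of B^(max d j0)! and hence of B^(j0!). So every periodic point
   of f is fixed by f^(j0!), and no cycle is longer than j0!. *)

Lemma mxchain_stable (F : fieldType) (m n : nat) (W : nat -> 'M[F]_(m, n)) :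
  (forall i j, (i <= j)%N -> (W i <= W j)%MS) ->
  exists j0, forall j, (j0 <= j)%N -> (W j <= W j0)%MS.
Proof.
move=> W_mono.
pose attained r := `[< exists j, \rank (W j) = r >].
have attained0 : exists r, attained r by exists (\rank (W 0)); apply/asboolP; exists 0%N.
have attained_le r : attained r -> (r <= n)%N by move/asboolP=> [j <-]; apply: rank_leq_col.
case: (ex_maxnP attained0 attained_le) => _ /asboolP [j0 <-] rank_max.
exists j0 => j le_j0j; have /mxrank_leqif_sup[_ <-] := W_mono _ _ le_j0j.
by rewrite eqn_leq mxrankS ?W_mono // rank_max //; apply/asboolP; exists j.
Qed.

Section PeriodicSpace.
Variables (F : fieldType) (n : nat) (A : 'M[F]_n).

Definition periodic_space d := kermx (A ^+ d - 1).

Lemma periodic_spaceP m (u : 'M_(m, n)) d :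
  reflect (u *m A ^+ d = u) (u <= periodic_space d)%MS.
Proof.
apply: (iffP sub_kermxP); rewrite mulmxBr mulmx1; first by move/eqP; rewrite subr_eq0 => /eqP.
by move=> ->; rewrite subrr.
Qed.

Lemma periodic_space_dvd d e : (d %| e)%N -> (periodic_space d <= periodic_space e)%MS.
Proof.
case/dvdnP=> q ->; apply/periodic_spaceP; rewrite mulnC exprM.
have /periodic_spaceP Ad_fix := submx_refl (periodic_space d).
by elim: q => [|q IHq]; rewrite ?expr0 ?mulmx1 // exprSr -mulmxE mulmxA IHq Ad_fix.
Qed.

Lemma common_period : exists2 M, (0 < M)%N &
  forall m (u : 'M_(m, n)) d, (0 < d)%N -> u *m A ^+ d = u -> u *m A ^+ M = u.
Proof.
pose W j := periodic_space j`!.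
have W_mono i j : (i <= j)%N -> (W i <= W j)%MS.
  move=> le_ij; apply: periodic_space_dvd.
  by rewrite -(ffact_fact (leq_subr i j)) subKn // dvdn_mull.
have [j0 W_stable] := mxchain_stable W_mono.
exists j0`!; first exact: fact_gt0.
move=> m u d d_gt0 /periodic_spaceP ud; apply/periodic_spaceP.
apply: submx_trans (W_stable _ (leq_maxr d j0)).
apply: submx_trans ud (periodic_space_dvd _).
by rewrite dvdn_fact // d_gt0 leq_maxl.
Qed.

End PeriodicSpace.

(* Row vectors, because MathComp's subspaces ([kermx], [<=%MS]) are row spaces. *)
Definition rat_row n (x : 'cV[int]_n) : 'rV[rat]_n := (map_mx intr x)^T.

Lemma rat_row_inj n : injective (@rat_row n).
Proof.
move=> x y /trmx_inj/matrixP xy; apply/matrixP=> i j.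
by have := xy i j; rewrite !mxE => /intr_inj.
Qed.

Section IntAdditive.
Variables (n : nat) (f : 'cV[int]_n -> 'cV[int]_n).
Hypothesis f_add : {morph f : x y / x + y}.

Let f0 : f 0 = 0. Proof. by apply: (addrI (f 0)); rewrite -f_add !addr0. Qed.
Let fA : {additive 'cV[int]_n -> 'cV[int]_n} :=
  HB.pack f (GRing.isNmodMorphism.Build _ _ f (f0, f_add)).
Let fMz x k : f (x *~ k) = f x *~ k. Proof. exact: (raddfMz fA). Qed.
Let f_sum I r (P : pred I) F :
  f (\sum_(i <- r | P i) F i) = \sum_(i <- r | P i) f (F i).
Proof. exact: (raddf_sum fA). Qed.

Lemma additive_rat_mx : exists B : 'M[rat]_n, forall x, rat_row (f x) = rat_row x *m B.
Proof.
exists (\matrix_(j, i) (f (delta_mx j 0) i 0)%:~R) => x; apply/rowP=> i.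
have x_delta : x = \sum_(j < n) delta_mx j 0 *~ x j 0.
  rewrite {1}(matrix_sum_delta x); apply: eq_bigr => j _.
  by rewrite big_ord1 -scaler_int intz.
rewrite !mxE {1}x_delta f_sum summxE rmorph_sum; apply: eq_bigr => j _.
by rewrite !mxE fMz -scaler_int intz mxE rmorphM mulrC.
Qed.

Lemma additive_int_common_period : exists2 M, (0 < M)%N &
  forall x d, (0 < d)%N -> iter d f x = x -> iter M f x = x.
Proof.
have [B fB] := additive_rat_mx.
have iterB k x : rat_row (iter k f x) = rat_row x *m B ^+ k.
  elim: k => [|k IHk]; first by rewrite expr0 mulmx1.
  by rewrite iterS fB IHk exprSr -mulmxE mulmxA.
have [M M_gt0 BM] := common_period B.
exists M => // x d d_gt0 fdx; apply: rat_row_inj; rewrite iterB.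
by apply: BM d_gt0 _; rewrite -iterB fdx.
Qed.

End IntAdditive.

Lemma is_cycle_traject (T : eqType) (g : T -> T) a s : is_cycle g (a :: s) ->
  a :: s = traject g a (size s).+1 /\ iter (size s).+1 g a = a.
Proof.
case/and3P=> _ _ /fpathP[N gaN].
have N_eq : N = (size s).+1 by rewrite -(size_traject g (g a) N) -gaN size_rcons.
move: gaN; rewrite N_eq trajectSr => /rcons_inj[s_eq a_eq].
by rewrite trajectS iterSr -s_eq -a_eq.
Qed.

Lemma cycle_length_le (T : eqType) (g : T -> T) M m : (0 < M)%N ->
  (forall a d, (0 < d)%N -> iter d g a = a -> iter M g a = a) ->
  cycle_lengths g m -> (m <= M)%N.
Proof.
move=> M_gt0 gM [[|a s] [cyc <-]] //=; have [traj period] := is_cycle_traject cyc.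
rewrite leqNgt; apply/negP => lt_Ms; case/and3P: cyc => _ uniq_s _.
have := nth_uniq a (s := a :: s) lt_Ms (ltn0Sn _) uniq_s.
by rewrite traj !nth_traject //= (gM _ _ (ltn0Sn _) period) eqxx eqn0Ngt M_gt0.
Qed.

Theorem proposition3p2 (n : nat) (hn : (1 <= n)%N)
  (f : 'cV[int]_n -> 'cV[int]_n)
  (f_add : forall x y, f (x + y) = f x + f y)
  (f_bij : bijective f) :
  finite_set (cycle_lengths f).
Proof.
have [M M_gt0 fM] := additive_int_common_period f_add.
apply: (@sub_finite_set _ _ `I_M.+1); last exact: finite_II.
by move=> m /(cycle_length_le M_gt0 fM).
Qed.
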